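(* Let $\mathcal{H}$ be a complex separable Hilbert space and let $A = A^*$ be a bounded injective operator on $\mathcal{H}$ which is Hankel with respect to a pure isometry $V$ of multiplicity $N$, and suppose $AV > 0$. Let $A = J|A|$ be the polar decomposition of $A$, where $|A| = \sqrt{A^*A}$ and $J$ is a self-adjoint unitary. Then $|A| > 0$ is $W$-Hankel and doubly-positive, where $W = JV$. Moreover, if $W = W_0 \oplus U$ is the Wold decomposition of $W$ on $\mathcal{H} = \mathcal{H}_0 \oplus \mathcal{H}'$, with $W_0$ a pure isometry on $\mathcal{H}_0$ and $U$ unitary on $\mathcal{H}'$, then $W_0$ has multiplicity $N$, both $\mathcal{H}_0$ and $\mathcal{H}'$ are invariant under $|A|$, and either $U = I_{\mathcal{H}'}$ or $\mathcal{H}' = \{0\}$.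
   Context: For an isometry $V$, a bounded operator $A$ is $V$-Hankel if $V^*A = AV$; a positive semi-definite $A$ is $V$-Hankel and doubly-positive if it is $V$-Hankel and $AV = V^*A$ is positive semi-definite. For an operator $T$, $T>0$ means $T$ is positive semi-definite and injective. An isometry is pure if it is unitarily equivalent to the unilateral shift $M_z$ on $H^2\otimes\mathbb{C}^n$ for some $n \in \mathbb{N}\cup\{+\infty\}$; its multiplicity is $n = \dim(\mathrm{Ran}\, V)^\perp$. The Wold decomposition writes any isometry as an orthogonal direct sum of a pure isometry and a unitary. *)

From HB Require Import structures.
From mathcomp Require Import all_boot all_order all_algebra.
From mathcomp Require Import complex.
From mathcomp Require Import reals.
Set Implicit Arguments. Unset Strict Implicit. Unset Printing Implicit Defensive.
Import Order.TTheory GRing.Theory Num.Theory.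
Local Open Scope ring_scope.
Local Open Scope complex_scope.

Section Hilbert.
Variable R : realType.
Variable H : lmodType R[i].
Variable ip : H -> H -> R[i].   (* inner product, linear in the first argument *)

Definition hnorm (x : H) : R := Num.sqrt (complex.Re (ip x x)).

Definition cvg_to (u : nat -> H) (l : H) : Prop :=
  forall e : R, 0 < e -> exists N, forall n, (N <= n)%N -> hnorm (u n - l) < e.

Definition cauchy_seq (u : nat -> H) : Prop :=
  forall e : R, 0 < e -> exists N, forall n m, (N <= n)%N -> (N <= m)%N ->
    hnorm (u n - u m) < e.

Definition is_sep_hilbert : Prop :=
  (forall (a : R[i]) x y z, ip (a *: x + y) z = a * ip x z + ip y z) /\
  (forall x y, ip y x = (ip x y)^*) /\
  (forall x, 0 <= ip x x) /\
  (forall x, ip x x = 0 -> x = 0) /\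
  (forall u, cauchy_seq u -> exists l, cvg_to u l) /\
  (exists d : nat -> H, forall x (e : R), 0 < e -> exists n, hnorm (x - d n) < e).

Definition lin_op (T : H -> H) : Prop :=
  forall (a : R[i]) x y, T (a *: x + y) = a *: T x + T y.

Definition bounded_op (T : H -> H) : Prop :=
  lin_op T /\ exists M : R, forall x, hnorm (T x) <= M * hnorm x.

Definition is_adjoint (T S : H -> H) : Prop :=
  forall x y, ip (T x) y = ip x (S y).

Definition selfadjoint (T : H -> H) : Prop := is_adjoint T T.

(* positive semi-definite: <Tx,x> >= 0 (in the order of R[i], i.e. real and >= 0) *)
Definition psd (T : H -> H) : Prop := forall x, 0 <= ip (T x) x.

(* T > 0 : positive semi-definite and injective *)
Definition pos_inj (T : H -> H) : Prop := psd T /\ injective T.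

Definition isom_op (V : H -> H) : Prop :=
  lin_op V /\ forall x y, ip (V x) (V y) = ip x y.

Definition unitary_op (U : H -> H) : Prop :=
  isom_op U /\ forall y, exists x, U x = y.

(* V-Hankel (Vs being the adjoint of V): V^* A = A V *)
Definition hankel (V Vs A : H -> H) : Prop := forall x, Vs (A x) = A (V x).

Definition hankel_dpos (V Vs A : H -> H) : Prop :=
  psd A /\ hankel V Vs A /\ psd (A \o V).

Definition closed_subspace (S : H -> Prop) : Prop :=
  [/\ S 0,
      (forall (a : R[i]) x y, S x -> S y -> S (a *: x + y)) &
      (forall u l, (forall n, S (u n)) -> cvg_to u l -> S l)].

Definition orthocompl (S : H -> Prop) : H -> Prop :=
  fun x => forall y, S y -> ip x y = 0.

Definition inv_sub (T : H -> H) (S : H -> Prop) : Prop :=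
  forall x, S x -> S (T x).

Definition pure_on (V : H -> H) (S : H -> Prop) : Prop :=
  forall x, (forall n, exists y, S y /\ x = iter n V y) -> x = 0.

Definition onto_on (V : H -> H) (S : H -> Prop) : Prop :=
  forall y, S y -> exists x, S x /\ V x = y.

(* wandering subspace S ⊖ V S of V restricted to the inv_sub subspace S;
   its (Hilbert) dimension is the multiplicity of V|S *)
Definition wandering (V : H -> H) (S : H -> Prop) : H -> Prop :=
  fun x => S x /\ forall y, S y -> ip x (V y) = 0.

Definition same_dim (S1 S2 : H -> Prop) : Prop :=
  exists f : H -> H, [/\ lin_op f,
    (forall x, S1 x -> S2 (f x)),
    (forall x y, S1 x -> S1 y -> ip (f x) (f y) = ip x y) &
    (forall y, S2 y -> exists x, S1 x /\ f x = y)].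

End Hilbert.

(* Write P = |A| and W = JV.  Since A = JP is self-adjoint, P commutes with J, so
   PW = JPV = AV >= 0 and W^* P = V^* J P = V^* A = AV = PW: P is W-Hankel and
   doubly positive.  Consequently the moments m_k(x) = Re <P W^k x, x> form a convex
   sequence (its second differences are <P y, y> and <PW y, y> for y = W^j x - W^(j+1) x),
   bounded by C |x|^2.  On the unitary part H' every x has preimages under all powers
   of W, which bounds the sequence backwards as well; so m_0 - 2 m_1 + m_2 =
   <P (x - Wx), x - Wx> <= 0, hence P (x - Wx) = 0 and W = I on H'.  Conversely a
   fixed vector of W lies in H' because W is pure on H0.  As W^* P = PW, P maps fixed
   vectors of W to fixed vectors, so P leaves H' and, being self-adjoint, H0 invariant.
   Finally J maps ker V^* isometrically onto the wandering subspace H0 ⊖ W H0. *)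
From HB Require Import structures.
From mathcomp Require Import all_boot all_order all_algebra.
From mathcomp Require Import complex boolp classical_sets reals.
From mathcomp Require Import ring lra.
Import Order.TTheory GRing.Theory Num.Theory.
Set Implicit Arguments. Unset Strict Implicit. Unset Printing Implicit Defensive.
Local Open Scope ring_scope.
Local Open Scope complex_scope.

(* [Re] alone would be the [R[i]]-valued [Num.Re]. *)
Local Notation Re := complex.Re.
Local Notation Im := complex.Im.

Section ComplexFacts.
Variable R : realType.
Implicit Types (z w : R[i]) (t : R).

Lemma ReD z w : Re (z + w) = Re z + Re w.
Proof. exact: (raddfD (@complex.Re R : Rcomplex R -> R)). Qed.

Lemma ReN z : Re (- z) = - Re z.
Proof. exact: (raddfN (@complex.Re R : Rcomplex R -> R)). Qed.

Lemma ReJ z : Re z^*%C = Re z.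
Proof. by case: z. Qed.

Lemma Re_realM t z : Re (t%:C * z) = t * Re z.
Proof. by case: z => a b /=; rewrite !mul0r subr0. Qed.

Lemma Re_iJM z : Re ('i^*%C * z) = Im z.
Proof. by case: z => a b /=; rewrite mul0r sub0r mulN1r opprK. Qed.

Lemma complex_ge0_ImRe z : 0 <= z -> Im z = 0 /\ 0 <= Re z.
Proof. by rewrite lecE => /andP[/eqP]. Qed.

Lemma complex_eq0 z : Re z = 0 -> Im z = 0 -> z = 0.
Proof. by case: z => a b /= -> ->. Qed.

End ComplexFacts.

Section RealFacts.
Variable R : realType.

Lemma quadratic_ge0_eq0 (r b : R) :
  0 <= b -> (forall t, 0 <= 2 * t * r + t ^+ 2 * b) -> r = 0.
Proof.
move=> b_ge0 h; pose u := (b + 1)^-1.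
have u_gt0 : 0 < u by rewrite invr_gt0; lra.
have ub : u * b = 1 - u.
  by rewrite -[X in X - _](@mulVf _ (b + 1)) 1?mulrDr ?mulr1 ?addrK //; apply: lt0r_neq0; lra.
have := h (- r * u).
have -> : 2 * (- r * u) * r + (- r * u) ^+ 2 * b = - (r ^+ 2 * (u * (1 + u))).
  by transitivity (- 2 * r ^+ 2 * u + r ^+ 2 * u * (u * b)); [ring | rewrite ub; ring].
rewrite oppr_ge0 pmulr_lle0 ?mulr_gt0 //; last lra.
by move=> r2_le0; apply/eqP; rewrite -sqrf_eq0 eq_le r2_le0 sqr_ge0.
Qed.

Lemma natmul_bounded_le0 (c C : R) : (forall n : nat, n%:R * c <= C) -> c <= 0.
Proof.
move=> h; rewrite leNgt; apply/negP => c_gt0.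
have bound_ge0 : 0 <= `|C| / c by rewrite divr_ge0 // ltW.
have := h (Num.bound (`|C| / c)); have := archi_boundP bound_ge0.
rewrite ltr_pdivrMr //; have := ler_norm C; lra.
Qed.

Lemma invSn_gt0 (n : nat) : 0 < n.+1%:R^-1 :> R.
Proof. by rewrite invr_gt0 ltr0Sn. Qed.

Lemma invSn_le (k n : nat) : (k <= n)%N -> n.+1%:R^-1 <= k.+1%:R^-1 :> R.
Proof. by move=> kn; rewrite lef_pV2 ?posrE ?ltr0Sn // ler_nat ltnS. Qed.

Definition convex_seq (g : nat -> R) := forall k, 0 <= g k - 2 * g k.+1 + g k.+2.

Lemma convex_seq_secant g : convex_seq g -> forall n : nat, g 0 + n%:R * (g 1 - g 0) <= g n.
Proof.
move=> g_cvx; have diff_ge n : g 1 - g 0 <= g n.+1 - g n.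
  by elim: n => [|n IH]; [lra | have := g_cvx n; lra].
elim => [|n IH]; first by rewrite mul0r addr0.
by have := diff_ge n; rewrite -natr1 mulrDl mul1r; lra.
Qed.

Lemma convex_seq_back g : convex_seq g -> forall n : nat, n%:R * (g n - g n.+1) <= g 0 - g n.
Proof.
move=> g_cvx; elim => [|n IH]; first by rewrite mul0r subrr.
have := mulr_ge0 (ler0n R n) (g_cvx n); have := g_cvx n.
by rewrite -natr1 mulrDl mul1r; lra.
Qed.

End RealFacts.

Section InnerProduct.
Variables (R : realType) (H : lmodType R[i]) (ip : H -> H -> R[i]).
Hypothesis hH : is_sep_hilbert ip.
Implicit Types (x y z : H) (a : R[i]).

Lemma ip_scaleDl a x y z : ip (a *: x + y) z = a * ip x z + ip y z.
Proof. by case: hH => h _; apply: h. Qed.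

Lemma ip_conj x y : ip y x = (ip x y)^*%C.
Proof. by case: hH => _ [h _]; apply: h. Qed.

Lemma ip_ge0 x : 0 <= ip x x.
Proof. by case: hH => _ [_ [h _]]; apply: h. Qed.

Lemma ip_eq0 x : ip x x = 0 -> x = 0.
Proof. by case: hH => _ [_ [_ [h _]]]; apply: h. Qed.

Lemma ip_complete u : cauchy_seq ip u -> exists l, cvg_to ip u l.
Proof. by case: hH => _ [_ [_ [_ [h _]]]]; apply: h. Qed.

Lemma ipDl x y z : ip (x + y) z = ip x z + ip y z.
Proof. by have := ip_scaleDl 1 x y z; rewrite scale1r mul1r. Qed.

Lemma ip0l z : ip 0 z = 0.
Proof. by apply: (addrI (ip 0 z)); rewrite -ipDl !addr0. Qed.

Lemma ipZl a x z : ip (a *: x) z = a * ip x z.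
Proof. by rewrite -[a *: x]addr0 ip_scaleDl ip0l addr0. Qed.

Lemma ipNl x z : ip (- x) z = - ip x z.
Proof. by rewrite -scaleN1r ipZl mulN1r. Qed.

Lemma ipBl x y z : ip (x - y) z = ip x z - ip y z.
Proof. by rewrite ipDl ipNl. Qed.

Lemma ipDr x y z : ip z (x + y) = ip z x + ip z y.
Proof. by rewrite ip_conj ipDl raddfD /= -!ip_conj. Qed.

Lemma ipNr x z : ip z (- x) = - ip z x.
Proof. by rewrite ip_conj ipNl raddfN /= -ip_conj. Qed.

Lemma ipBr x y z : ip z (x - y) = ip z x - ip z y.
Proof. by rewrite ipDr ipNr. Qed.

Lemma ipZr a x z : ip z (a *: x) = a^*%C * ip z x.
Proof. by rewrite ip_conj ipZl rmorphM /= -ip_conj. Qed.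

Lemma ip_injl x y : (forall z, ip x z = ip y z) -> x = y.
Proof.
by move=> h; apply/eqP; rewrite -subr_eq0; apply/eqP/ip_eq0; rewrite ipBl h subrr.
Qed.

Lemma ip_injr x y : (forall z, ip z x = ip z y) -> x = y.
Proof. by move=> h; apply: ip_injl => z; rewrite ip_conj h -ip_conj. Qed.

Lemma Re_ip_conj x y : Re (ip y x) = Re (ip x y).
Proof. by rewrite ip_conj ReJ. Qed.

Definition sqn x := Re (ip x x).

Lemma sqn_ge0 x : 0 <= sqn x.
Proof. by case: (complex_ge0_ImRe (ip_ge0 x)). Qed.

Lemma sqn_eq0 x : sqn x = 0 -> x = 0.
Proof. by move=> h; apply/ip_eq0/complex_eq0 => //; case: (complex_ge0_ImRe (ip_ge0 x)). Qed.

Lemma sqnD x y : sqn (x + y) = sqn x + 2 * Re (ip x y) + sqn y.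
Proof. by rewrite /sqn ipDl !ipDr !ReD [Re (ip y x)]Re_ip_conj; lra. Qed.

Lemma sqnB x y : sqn (x - y) = sqn x - 2 * Re (ip x y) + sqn y.
Proof. by rewrite /sqn ipBl !ipBr !(ReD, ReN) [Re (ip y x)]Re_ip_conj; lra. Qed.

Lemma sqnZ (t : R) x : sqn (t%:C *: x) = t ^+ 2 * sqn x.
Proof. by rewrite /sqn ipZl ipZr conjc_real mulrA -rmorphM Re_realM expr2. Qed.

Lemma hnorm_ge0 x : 0 <= hnorm ip x.
Proof. exact: sqrtr_ge0. Qed.

Lemma hnorm_sqr x : hnorm ip x ^+ 2 = sqn x.
Proof. exact/sqr_sqrtr/sqn_ge0. Qed.

Lemma hnorm_lt x (e : R) : 0 < e -> sqn x < e ^+ 2 -> hnorm ip x < e.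
Proof.
by move=> e_gt0; rewrite -hnorm_sqr ltr_pXn2r // ?nnegrE ?hnorm_ge0 // ltW.
Qed.

Lemma sqn_lt x (e : R) : hnorm ip x < e -> sqn x < e ^+ 2.
Proof.
move=> lt_e; have e_ge0 := le_trans (hnorm_ge0 x) (ltW lt_e).
by rewrite -hnorm_sqr ltr_pXn2r // nnegrE hnorm_ge0.
Qed.

Lemma Re_ip_le (s : R) x y : 2 * s * Re (ip x y) <= s ^+ 2 * sqn x + sqn y.
Proof. by have := sqn_ge0 (s%:C *: x - y); rewrite sqnB sqnZ ipZl Re_realM; lra. Qed.

Lemma sqn_parallelogram x y : sqn (x - y) + sqn (x + y) = 2 * sqn x + 2 * sqn y.
Proof. by rewrite sqnB sqnD; lra. Qed.

Lemma isom_fixed_of_adjoint_fixed (W Ws : H -> H) y :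
  isom_op ip W -> is_adjoint ip W Ws -> Ws y = y -> W y = y.
Proof.
move=> [_ W_iso] W_adj fix_y; apply/eqP; rewrite -subr_eq0; apply/eqP/sqn_eq0.
by rewrite sqnB /sqn W_iso W_adj fix_y; lra.
Qed.

Lemma adjoint_sym (T S : H -> H) x y : is_adjoint ip T S -> ip (S x) y = ip x (T y).
Proof. by move=> T_adj; rewrite ip_conj -T_adj -ip_conj. Qed.

Lemma orthocomplB (S : H -> Prop) x y :
  orthocompl ip S x -> orthocompl ip S y -> orthocompl ip S (x - y).
Proof. by move=> Sx Sy h Sh; rewrite ipBl Sx // Sy // subrr. Qed.

Lemma sqn_iter_isom (W : H -> H) n x : isom_op ip W -> sqn (iter n W x) = sqn x.
Proof. by move=> [_ W_iso]; elim: n => //= n IH; rewrite /sqn W_iso. Qed.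

Section LinearOperator.
Variable T : H -> H.
Hypothesis T_lin : lin_op T.

Lemma lin_opD x y : T (x + y) = T x + T y.
Proof. by have := T_lin 1 x y; rewrite !scale1r. Qed.

Lemma lin_op0 : T 0 = 0.
Proof. by apply: (addrI (T 0)); rewrite -lin_opD !addr0. Qed.

Lemma lin_opZ a x : T (a *: x) = a *: T x.
Proof. by have := T_lin a x 0; rewrite !addr0 lin_op0 addr0. Qed.

Lemma lin_opB x y : T (x - y) = T x - T y.
Proof. by rewrite lin_opD -scaleN1r lin_opZ scaleN1r. Qed.

Hypothesis T_sa : selfadjoint ip T.

Lemma Re_ip_selfadjoint x y : Re (ip (T x) y) = Re (ip (T y) x).
Proof. by rewrite T_sa Re_ip_conj. Qed.

Lemma Re_ip_selfadjointB x y : Re (ip (T (x - y)) (x - y)) =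
  Re (ip (T x) x) - 2 * Re (ip (T y) x) + Re (ip (T y) y).
Proof.
by rewrite lin_opB !ipBl !ipBr !(ReD, ReN) [Re (ip (T x) y)]Re_ip_selfadjoint; lra.
Qed.

Lemma psd_ip_eq0 w : psd ip T -> ip (T w) w = 0 -> T w = 0.
Proof.
move=> T_psd Tw_w; apply: sqn_eq0; set y := T w.
apply: (@quadratic_ge0_eq0 _ _ (Re (ip (T y) y))); first by case: (complex_ge0_ImRe (T_psd y)).
move=> t; have [_] := complex_ge0_ImRe (T_psd (w + t%:C *: y)).
rewrite lin_opD lin_opZ !ipDl !ipDr !ipZl !ipZr conjc_real Tw_w (T_sa y w) -/y.
by rewrite !(ReD, Re_realM) /sqn (_ : Re 0 = 0) // expr2; lra.
Qed.

End LinearOperator.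

(** * Orthogonal projection onto a closed subspace *)

Lemma sqn_midpoint y u v :
  sqn (u - v) + 4 * sqn (y - (2^-1)%:C *: (u + v)) = 2 * sqn (y - u) + 2 * sqn (y - v).
Proof.
have two_mid : (y - v) + (y - u) = 2%:C *: (y - (2^-1)%:C *: (u + v)).
  rewrite scalerBr scalerA -rmorphM mulfV ?pnatr_eq0 // rmorph1 scale1r.
  by rewrite rmorph_nat scaler_nat mulr2n opprD addrACA [- v + _]addrC.
have diff : (y - v) - (y - u) = u - v by rewrite opprB addrC addrA subrK.
have := sqn_parallelogram (y - v) (y - u).
by rewrite diff two_mid sqnZ expr2; lra.
Qed.

Lemma sqn_le_of_cvg y (d : R) u l : 0 <= d ->
  (forall n, sqn (y - u n) < d + n.+1%:R^-1) -> cvg_to ip u l -> sqn (y - l) <= d.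
Proof.
move=> d_ge0 u_lt u_cvg; apply/ler_addgt0Pr => eps eps_gt0.
pose e := eps / (d + 4 + eps).
have e_def : e * (d + 4 + eps) = eps by rewrite divfK //; apply: lt0r_neq0; lra.
have e_gt0 : 0 < e by rewrite divr_gt0 //; lra.
have e_le1 : e <= 1 by rewrite /e ler_pdivrMr ?mul1r; lra.
clearbody e.
have [N N_cvg] := u_cvg e e_gt0.
have [k k_lt] := ltr_add_invr e_gt0; rewrite add0r in k_lt.
have [n Nn kn] : exists2 n, (N <= n)%N & (k <= n)%N.
  by exists (maxn N k); rewrite ?leq_maxl ?leq_maxr.
have a_lt : sqn (y - u n) < d + e.
  (* [lra] rejects inverses of non-constant terms, so they are generalized first. *)
  have := u_lt n; have := invSn_le R kn; move: k_lt.
  by move: (k.+1%:R^-1) (n.+1%:R^-1) => ek en; lra.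
have b_lt : sqn (u n - l) < e ^+ 2 by apply/sqn_lt/N_cvg.
have cross : 2 * Re (ip (y - u n) (u n - l)) <= e * sqn (y - u n) + e.
  rewrite -(ler_pM2l e_gt0); have := Re_ip_le e (y - u n) (u n - l); lra.
have -> : y - l = (y - u n) + (u n - l) by rewrite addrA subrK.
rewrite sqnD; have := sqn_ge0 (u n - l).
have := mulr_ge0 (ltW e_gt0) (ltW eps_gt0).
by have := ler_wpM2l (ltW e_gt0) (ltW a_lt); have := ler_wpM2l (ltW e_gt0) e_le1; lra.
Qed.

Section ClosedSubspace.
Variable S : H -> Prop.
Hypothesis S_closed : closed_subspace ip S.

Lemma subspace0 : S 0.
Proof. by case: S_closed. Qed.

Lemma subspace_scaleD a x y : S x -> S y -> S (a *: x + y).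
Proof. by case: S_closed => _ h _; apply: h. Qed.

Lemma subspace_limit u l : (forall n, S (u n)) -> cvg_to ip u l -> S l.
Proof. by case: S_closed => _ _ h; apply: h. Qed.

Lemma subspaceZ a x : S x -> S (a *: x).
Proof. by move=> Sx; rewrite -[_ *: x]addr0; apply: subspace_scaleD Sx subspace0. Qed.

Lemma subspaceD x y : S x -> S y -> S (x + y).
Proof. by move=> Sx Sy; rewrite -[x]scale1r; apply: subspace_scaleD. Qed.

Lemma subspaceB x y : S x -> S y -> S (x - y).
Proof. by move=> Sx Sy; rewrite addrC -scaleN1r; apply: subspace_scaleD. Qed.

Lemma min_dist_orth y p : S p -> (forall h, S h -> sqn (y - p) <= sqn (y - h)) ->
  forall h, S h -> ip (y - p) h = 0.
Proof.
move=> Sp p_min.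
have Re_orth h : S h -> Re (ip (y - p) h) = 0.
  move=> Sh; apply/eqP; rewrite -oppr_eq0; apply/eqP.
  apply: (quadratic_ge0_eq0 (sqn_ge0 h)) => t.
  have := p_min _ (subspace_scaleD t%:C Sh Sp).
  rewrite [_ + p]addrC opprD addrA [sqn (_ - _ *: h)]sqnB sqnZ ipZr conjc_real Re_realM.
  lra.
move=> h Sh; apply: complex_eq0; first exact: Re_orth.
by have := Re_orth _ (subspaceZ 'i Sh); rewrite ipZr Re_iJM.
Qed.

Lemma min_seq_cauchy y d hs : (forall h, S h -> d <= sqn (y - h)) ->
  (forall n, S (hs n)) -> (forall n, sqn (y - hs n) < d + n.+1%:R^-1) -> cauchy_seq ip hs.
Proof.
move=> d_le S_hs hs_lt.
have hs_close n m : sqn (hs n - hs m) < 2 * n.+1%:R^-1 + 2 * m.+1%:R^-1.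
  have := sqn_midpoint y (hs n) (hs m).
  have := d_le _ (subspaceZ (2^-1)%:C (subspaceD (S_hs n) (S_hs m))).
  by have := hs_lt n; have := hs_lt m; move: (n.+1%:R^-1) (m.+1%:R^-1) => en em; lra.
move=> e e_gt0.
have [k k_lt] : exists k, 0 + k.+1%:R^-1 < e ^+ 2 / 4.
  by apply: ltr_add_invr; rewrite divr_gt0 ?exprn_gt0.
exists k => n m kn km; apply: hnorm_lt => //.
have := hs_close n m; have := invSn_le R kn; have := invSn_le R km; move: k_lt.
by move: (k.+1%:R^-1) (n.+1%:R^-1) (m.+1%:R^-1) => ek en em; lra.
Qed.

Lemma exists_min_dist y : exists2 p, S p & forall h, S h -> sqn (y - p) <= sqn (y - h).
Proof.
pose E : set R := fun r => exists2 h, S h & r = sqn (y - h).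
have E_y : E (sqn (y - 0)) by exists 0 => //; exact: subspace0.
have E_lb : lbound E 0 by move=> _ [h _ ->]; exact: sqn_ge0.
have E_inf : has_inf E by split; [exists (sqn (y - 0)) | exists 0].
have inf_le h : S h -> inf E <= sqn (y - h) by move=> Sh; apply: ge_inf; [exists 0 | exists h].
have /choice [hs hs_spec] n : exists h, S h /\ sqn (y - h) < inf E + n.+1%:R^-1.
  by have [_ [h Sh ->] ?] := inf_adherent (invSn_gt0 R n) E_inf; exists h.
have S_hs n : S (hs n) := (hs_spec n).1.
have [l hs_cvg] := ip_complete (min_seq_cauchy inf_le S_hs (fun n => (hs_spec n).2)).
exists l => [|h Sh]; first exact: subspace_limit S_hs hs_cvg.
apply: le_trans (inf_le h Sh); apply: sqn_le_of_cvg hs_cvg => [|n]; last exact: (hs_spec n).2.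
by apply: lb_le_inf E_lb; exists (sqn (y - 0)).
Qed.

Lemma orth_decomp y : exists2 p, S p & forall h, S h -> ip (y - p) h = 0.
Proof. by have [p Sp p_min] := exists_min_dist y; exists p => //; apply: min_dist_orth. Qed.

End ClosedSubspace.

(** * Fixed vectors of an isometry *)

Section Moments.
Variables P W : H -> H.
Hypotheses (P_bounded : bounded_op ip P) (P_sa : selfadjoint ip P) (P_psd : psd ip P)
  (P_inj : injective P) (W_isom : isom_op ip W)
  (PW_shift : forall x y, ip (P (W x)) y = ip (P x) (W y)) (PW_psd : psd ip (P \o W)).

Let P_lin : lin_op P := P_bounded.1.
Let W_lin : lin_op W := W_isom.1.

Lemma PW_lin : lin_op (P \o W).
Proof. by move=> a x y; rewrite /= W_lin P_lin. Qed.

Lemma PW_sa : selfadjoint ip (P \o W).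
Proof. by move=> x y; rewrite /= PW_shift P_sa. Qed.

Definition moment z k := Re (ip (P (iter k W z)) z).

Lemma Re_ip_iter_moment z i j : Re (ip (P (iter i W z)) (iter j W z)) = moment z (i + j).
Proof.
elim: j i => [|j IH] i; first by rewrite addn0.
by rewrite iterS -PW_shift -iterS IH addSnnS.
Qed.

Lemma moment_iter z j i : moment (iter j W z) i = moment z (i + j.*2).
Proof. by rewrite /moment -iterD Re_ip_iter_moment -addnn addnA. Qed.

Lemma moment_second_diff w :
  Re (ip (P (w - W w)) (w - W w)) = moment w 0 - 2 * moment w 1 + moment w 2.
Proof.
rewrite (Re_ip_selfadjointB P_lin P_sa).
by rewrite -(Re_ip_iter_moment w 1 1) -(Re_ip_iter_moment w 1 0) -(Re_ip_iter_moment w 0 0).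
Qed.

Lemma moment_second_diffW w :
  Re (ip (P (W (w - W w))) (w - W w)) = moment w 1 - 2 * moment w 2 + moment w 3.
Proof.
rewrite [LHS](Re_ip_selfadjointB PW_lin PW_sa) /=.
by rewrite -(Re_ip_iter_moment w 2 1) -(Re_ip_iter_moment w 2 0) -(Re_ip_iter_moment w 1 0).
Qed.

Lemma moment0_ge0 z : 0 <= moment z 0.
Proof. by case: (complex_ge0_ImRe (P_psd z)). Qed.

Lemma moment1_ge0 z : 0 <= moment z 1.
Proof. by case: (complex_ge0_ImRe (PW_psd z)). Qed.

Lemma moment_convex z : convex_seq (moment z).
Proof.
move=> k; rewrite -(odd_double_half k); set w := iter k./2 W z.
have mw i : moment w i = moment z (i + k./2.*2) by exact: moment_iter.
case: (odd k) => /=.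
- have [_] := complex_ge0_ImRe (PW_psd (w - W w)).
  by rewrite /= moment_second_diffW !mw !addSn add0n.
- have [_] := complex_ge0_ImRe (P_psd (w - W w)).
  by rewrite moment_second_diff !mw !addSn !add0n.
Qed.

Lemma moment_le : exists C, forall z k, moment z k <= C * sqn z.
Proof.
have [_ [M P_le]] := P_bounded.
exists ((M ^+ 2 + 1) / 2) => z k; set x := iter k W z.
have : sqn (P x) <= M ^+ 2 * sqn z.
  rewrite -(sqn_iter_isom k z W_isom) -/x -!hnorm_sqr -exprMn.
  by rewrite ler_pXn2r ?nnegrE ?hnorm_ge0 ?P_le // (le_trans (hnorm_ge0 _) (P_le x)).
by have := Re_ip_le 1 (P x) z; rewrite /moment -/x; lra.
Qed.

Lemma moment2_le1 x : moment x 2 <= moment x 1.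
Proof.
have [C mC] := moment_le.
suff : moment x 2 - moment x 1 <= 0 by lra.
apply: (@natmul_bounded_le0 _ _ (C * sqn x)) => n.
have /= := convex_seq_secant (fun k => moment_convex x k.+1) n.
by have := mC x n.+1; have := moment1_ge0 x; lra.
Qed.

Lemma moment0_le1 x : (forall n, exists u, iter n W u = x) -> moment x 0 <= moment x 1.
Proof.
move=> orbit; have [C mC] := moment_le.
suff : 2 * (moment x 0 - moment x 1) <= 0 by lra.
apply: (@natmul_bounded_le0 _ _ (C * sqn x)) => n.
have [u <-] := orbit n; rewrite !moment_iter sqn_iter_isom // add0n add1n.
have := convex_seq_back (moment_convex u) n.*2.
have -> : n.*2%:R = n%:R * 2 :> R by rewrite -muln2 natrM.
by have := mC u 0; have := moment0_ge0 (iter n W u); rewrite moment_iter add0n; lra.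
Qed.

Lemma fixed_of_backward_orbit x : (forall n, exists u, iter n W u = x) -> W x = x.
Proof.
move=> orbit.
have P_diff : ip (P (x - W x)) (x - W x) = 0.
  have [Im0 Re_ge0] := complex_ge0_ImRe (P_psd (x - W x)).
  apply: complex_eq0 => //; move: Re_ge0; rewrite moment_second_diff.
  by have := moment2_le1 x; have := moment0_le1 orbit; lra.
apply/eqP; rewrite eq_sym -subr_eq0; apply/eqP/P_inj.
by rewrite (psd_ip_eq0 P_lin P_sa P_psd P_diff) (lin_op0 P_lin).
Qed.

End Moments.

Section WoldDecomposition.
Variables (W : H -> H) (H0 H' : H -> Prop).
Hypotheses (W_isom : isom_op ip W) (H'_closed : closed_subspace ip H')
  (H0_def : forall x, H0 x <-> orthocompl ip H' x)
  (W_H0 : inv_sub W H0) (W_H' : inv_sub W H') (W_pure : pure_on W H0).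

Lemma fixed_in_unitary_part y : W y = y -> H' y.
Proof.
move=> Wy; have [p H'p p_orth] := orth_decomp H'_closed y.
set b := y - p; have H0b : H0 b by apply/H0_def; exact: p_orth.
have b_diff : W b - b = p - W p.
  by rewrite /b (lin_opB W_isom.1) Wy opprB addrC addrA subrK.
have H'_diff : H' (p - W p) := subspaceB H'_closed H'p (W_H' H'p).
have H0_diff : H0 (W b - b).
  by apply/H0_def; apply: orthocomplB; apply/H0_def => //; apply: W_H0.
have Wb : W b = b.
  apply/eqP; rewrite -subr_eq0; apply/eqP/ip_eq0.
  by apply: (H0_def _).1 H0_diff _ _; rewrite b_diff.
have b0 : b = 0.
  apply: W_pure => n; exists b; split => //.
  by elim: n => //= n IH; rewrite -IH Wb.
by rewrite -(subrK p y) -/b b0 add0r.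
Qed.

End WoldDecomposition.

(** * Polar decomposition of a Hankel operator *)

Section HankelPolar.
Variables A V Vs P J : H -> H.
Hypotheses (A_sa : selfadjoint ip A) (A_inj : injective A)
  (V_isom : isom_op ip V) (V_adj : is_adjoint ip V Vs) (A_hankel : hankel V Vs A)
  (AV_pos : pos_inj ip (A \o V))
  (P_bounded : bounded_op ip P) (P_sa : selfadjoint ip P) (P_psd : psd ip P)
  (P_sqr : forall x, P (P x) = A (A x))
  (J_unitary : unitary_op ip J) (J_sa : selfadjoint ip J)
  (A_polar : forall x, A x = J (P x)).

Local Notation W := (J \o V).

Lemma P_J_comm x : P (J x) = J (P x).
Proof. by apply: ip_injr => y; rewrite -P_sa -J_sa -A_polar A_sa A_polar. Qed.

Lemma P_injective : injective P.
Proof. by move=> x y Pxy; apply/A_inj/A_inj; rewrite -!P_sqr Pxy. Qed.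

Lemma J_involutive : involutive J.
Proof. by move=> x; apply: ip_injl => y; rewrite J_sa J_unitary.1.2. Qed.

Lemma W_isom : isom_op ip W.
Proof.
have [[J_lin J_iso] _] := J_unitary; have [V_lin V_iso] := V_isom.
by split=> [a x y | x y]; rewrite /= ?V_lin ?J_lin // J_iso V_iso.
Qed.

Lemma W_adjoint : is_adjoint ip W (Vs \o J).
Proof. by move=> x y; rewrite /= J_sa V_adj. Qed.

Lemma P_hankel : hankel W (Vs \o J) P.
Proof. by move=> x; rewrite /= -A_polar A_hankel A_polar P_J_comm. Qed.

Lemma PW_shift x y : ip (P (W x)) y = ip (P x) (W y).
Proof. by rewrite -P_hankel (adjoint_sym _ _ W_adjoint). Qed.

Lemma PW_psd : psd ip (P \o W).
Proof. by move=> x; rewrite /= P_J_comm -A_polar; apply: AV_pos.1. Qed.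

Lemma P_pos_inj : pos_inj ip P.
Proof. exact: (conj P_psd P_injective). Qed.

Lemma P_hankel_dpos : hankel_dpos ip W (Vs \o J) P.
Proof. by split; [|split]; [exact: P_psd | exact: P_hankel | exact: PW_psd]. Qed.

Section WoldParts.
Variables H0 H' : H -> Prop.
Hypotheses (H'_closed : closed_subspace ip H')
  (H0_def : forall x, H0 x <-> orthocompl ip H' x)
  (W_H0 : inv_sub W H0) (W_H' : inv_sub W H')
  (W_pure : pure_on W H0) (W_onto : onto_on W H').

Lemma W_fixes_unitary_part x : H' x -> W x = x.
Proof.
move=> H'x; apply: (fixed_of_backward_orbit P_bounded P_sa P_psd P_injective W_isom PW_shift PW_psd).
move=> n; suff [u _ <-] : exists2 u, H' u & iter n W u = x by exists u.
elim: n => [|n [u H'u <-]]; first by exists x.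
by have [v [H'v <-]] := W_onto H'u; exists v; rewrite // -iterSr.
Qed.

Lemma P_inv_unitary_part : inv_sub P H'.
Proof.
move=> x H'x; apply: (fixed_in_unitary_part W_isom H'_closed H0_def W_H0 W_H' W_pure).
by apply: (isom_fixed_of_adjoint_fixed W_isom W_adjoint); rewrite P_hankel W_fixes_unitary_part.
Qed.

Lemma P_inv_pure_part : inv_sub P H0.
Proof.
move=> x H0x; apply/H0_def => h H'h.
by rewrite P_sa; apply: (H0_def x).1 H0x _ (P_inv_unitary_part H'h).
Qed.

Lemma wandering_J : same_dim ip (wandering ip V (fun _ => True)) (wandering ip W H0).
Proof.
have [[J_lin J_iso] _] := J_unitary.
exists J; split => // [x [_ x_wand] | y [H0y y_wand]].
- split=> [|z _]; last by rewrite /= J_iso; apply: x_wand.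
  apply/H0_def => h H'h; have [u [_ <-]] := W_onto H'h.
  by rewrite /= J_iso; apply: x_wand.
- pose v := Vs (J y).
  have H0v : H0 v.
    apply/H0_def => h H'h.
    by rewrite /v (adjoint_sym _ _ V_adj) J_sa; apply: (H0_def y).1 H0y _ (W_H' H'h).
  have v0 : v = 0.
    by apply: ip_eq0; rewrite {1}/v (adjoint_sym _ _ V_adj) J_sa; apply: y_wand.
  exists (J y); split; last exact: J_involutive.
  by split=> // z _; rewrite -(adjoint_sym _ _ V_adj) -/v v0 ip0l.
Qed.

Lemma Wold_parts :
  [/\ same_dim ip (wandering ip V (fun _ => True)) (wandering ip W H0),
      inv_sub P H0, inv_sub P H' & forall x, H' x -> W x = x].
Proof.
by split; [exact: wandering_J | exact: P_inv_pure_part | exact: P_inv_unitary_part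
          | exact: W_fixes_unitary_part].
Qed.

End WoldParts.

End HankelPolar.

End InnerProduct.

Theorem theoremC (R : realType) (H : lmodType R[i]) (ip : H -> H -> R[i])
  (hH : is_sep_hilbert ip)
  (A V Vs : H -> H)
  (hA : bounded_op ip A) (hAsa : selfadjoint ip A) (hAinj : injective A)
  (hV : isom_op ip V) (hVs : is_adjoint ip V Vs)
  (hVpure : pure_on V (fun _ => True))
  (hAhank : hankel V Vs A)
  (hAV : pos_inj ip (A \o V))
  (P J : H -> H)
  (hP : bounded_op ip P) (hPsa : selfadjoint ip P) (hPpsd : psd ip P)
  (hPsq : forall x, P (P x) = A (A x))
  (hJ : unitary_op ip J) (hJsa : selfadjoint ip J)
  (hAJP : forall x, A x = J (P x)) :
  let W := J \o V in
  pos_inj ip P /\ hankel_dpos ip W (Vs \o J) P /\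
  forall H0 H' : H -> Prop,
    closed_subspace ip H' ->
    (forall x, H0 x <-> orthocompl ip H' x) ->
    inv_sub W H0 -> inv_sub W H' ->
    pure_on W H0 -> onto_on W H' ->
    [/\ same_dim ip (wandering ip V (fun _ => True)) (wandering ip W H0),
        inv_sub P H0, inv_sub P H' &
        ((forall x, H' x -> W x = x) \/ (forall x, H' x -> x = 0))].
Proof.
move=> W; rewrite {}/W; split; first exact: P_pos_inj hAinj hPpsd hPsq.
split; first exact: (P_hankel_dpos hH hAsa hAhank hAV hPsa hPpsd hJsa hAJP).
move=> H0 H' H'_closed H0_def W_H0 W_H' W_pure W_onto.
have [dimW0 P_H0 P_H' W_id] := Wold_parts hH hAsa hAinj hV hVs hAhank hAV hP hPsa hPpsd hPsq
  hJ hJsa hAJP H'_closed H0_def W_H0 W_H' W_pure W_onto.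
by split=> //; left.
Qed.
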